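(* If $p>2$ is a prime, then $P(p,3)=\mathrm{lcm}(O(p),6)$.
   Context: $O(p)$ is the multiplicative order of $2$ modulo $p$. For positive integers $m,n$, let $\mathbf{Z}_m$ be the integers modulo $m$ and $T:\mathbf{Z}_m^n\to\mathbf{Z}_m^n$, $T(a_0,\dots,a_{n-1})=(a_0+a_1,a_1+a_2,\dots,a_{n-1}+a_0)$. For $\mathbf{a}\in\mathbf{Z}_m^n$ the cycle length of $(T^k\mathbf{a})_{k\ge0}$ is the smallest positive integer $P$ such that there is $N$ with $T^{k+P}\mathbf{a}=T^k\mathbf{a}$ for all $k\ge N$. $P(m,n)$ denotes the maximum of these cycle lengths over all $\mathbf{a}\in\mathbf{Z}_m^n$. *)

From mathcomp Require Import all_boot all_order all_algebra.
Set Implicit Arguments. Unset Strict Implicit. Unset Printing Implicit Defensive.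
Import GRing.Theory.
Local Open Scope ring_scope.

(* Vectors of Z_m^n, as finite functions 'I_n -> 'Z_m.
   NB: 'Z_m is genuinely Z/mZ only for m >= 2; the theorem uses m = p > 2. *)
Definition vec (m n : nat) := {ffun 'I_n -> 'Z_m}.

Definition Tmap (m n : nat) (a : vec m n) : vec m n :=
  [ffun i => a i + a (ordS i)].

Definition is_period (m n : nat) (a : vec m n) (P : nat) : Prop :=
  (0 < P)%N /\ exists N : nat, forall k : nat, (N <= k)%N ->
    iter (k + P) (@Tmap m n) a = iter k (@Tmap m n) a.

Definition is_cycle_length (m n : nat) (a : vec m n) (P : nat) : Prop :=
  is_period a P /\ forall Q : nat, is_period a Q -> (P <= Q)%N.

Definition is_Pmax (m n L : nat) : Prop :=
  (exists a : vec m n, is_cycle_length a L) /\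
  forall (a : vec m n) (P : nat), is_cycle_length a P -> (P <= L)%N.

Definition is_order2 (p o : nat) : Prop :=
  (0 < o)%N /\ (2 ^ o = 1 %[mod p])%N /\
  forall k : nat, (0 < k)%N -> (2 ^ k = 1 %[mod p])%N -> (o <= k)%N.

From mathcomp Require Import all_boot all_order all_algebra ring zify.
Import GRing.Theory.
Local Open Scope ring_scope.
Set Implicit Arguments. Unset Strict Implicit. Unset Printing Implicit Defensive.

(* On Z_m^3 we have T = J - s, where J is the all-ones matrix and s the cyclic
   shift; as J s = J and J^2 = 3 J, this gives
   T^k a = (-1)^k s^k a + j_k (a_0 + a_1 + a_2) (1, 1, 1), where j_k is the
   k-th Jacobsthal number, 3 j_k = 2^k - (-1)^k.  Hence T^k is the identity iff
   6 | k and p | j_k, and already T^k (1, 0, 0) = (1, 0, 0) forces this.  For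
   6 | k, p | j_k is equivalent to p | 2^k - 1, i.e. to O(p) | k: when p = 3
   both hold because 3 | j_(6q). *)

Lemma iter_mod (T : Type) (f : T -> T) (L k : nat) (x : T) :
  (forall y, iter L f y = y) -> iter k f x = iter (k %% L) f x.
Proof.
move=> fL; rewrite {1}(divn_eq k L) addnC iterD iterM.
by congr (iter _ f _); elim: (k %/ L)%N => //= q ->.
Qed.

Lemma is_period_of_iter_id m n L (a : vec m n) :
  (0 < L)%N -> (forall b, iter L (@Tmap m n) b = b) -> is_period a L.
Proof. by move=> L_gt0 TL; split=> //; exists 0%N => k _; rewrite iterD TL. Qed.

Lemma is_period_iter_fixed m n L Q (a : vec m n) :
  (0 < L)%N -> (forall b, iter L (@Tmap m n) b = b) -> is_period a Q ->
  iter Q (@Tmap m n) a = a.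
Proof.
move=> L_gt0 TL [_ [N per_N]]; rewrite (iter_mod _ _ TL).
move: (per_N _ (leq_pmulr N L_gt0)).
by rewrite (iter_mod (N * L + Q) _ TL) (iter_mod (N * L) _ TL) modnMDl modnMl.
Qed.

Lemma order2_dvd p o k : is_order2 p o -> (2 ^ k == 1 %[mod p]) = (o %| k)%N.
Proof.
case=> o_gt0 [pow_o o_min].
have pow_mul j : (2 ^ (j * o) = 1 %[mod p])%N.
  by rewrite mulnC expnM -modnXm pow_o modnXm exp1n.
apply/idP/idP => [/eqP pow_k | /dvdnP[j ->]]; last exact/eqP/pow_mul.
rewrite /dvdn; apply: contraTT (ltn_pmod k o_gt0); rewrite -lt0n -leqNgt => r_gt0.
apply: o_min r_gt0 _.
by rewrite -pow_k {2}(divn_eq k o) expnD -modnMml pow_mul modnMml mul1n.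
Qed.

Fixpoint jacobsthal (k : nat) : nat :=
  match k with
  | 0 => 0
  | 1 => 1
  | (k'.+1 as k1).+1 => jacobsthal k1 + (jacobsthal k').*2
  end.

Lemma jacobsthalSS k :
  jacobsthal k.+2 = (jacobsthal k.+1 + (jacobsthal k).*2)%N.
Proof. by []. Qed.

Lemma jacobsthalS_add k : (jacobsthal k.+1 + jacobsthal k = 2 ^ k)%N.
Proof. by elim: k => // k IH; rewrite jacobsthalSS expnS -IH; lia. Qed.

Lemma jacobsthal_mul3 k : (3 * jacobsthal k + 1 = 2 ^ k + (odd k).*2)%N.
Proof.
elim: k => // k IH; have := jacobsthalS_add k.
by rewrite expnS /=; case: (odd k) IH => /=; lia.
Qed.

Lemma dvdn3_jacobsthal q : (3 %| jacobsthal (q * 6))%N.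
Proof.
have jac_pow : (3 * jacobsthal (q * 6) + 1 = 64 ^ q)%N.
  by rewrite jacobsthal_mul3 oddM andbF addn0 [(q * 6)%N]mulnC expnM.
rewrite -(dvdn_pmul2l (isT : (0 < 3)%N)) -(addnK 1 (3 * jacobsthal (q * 6)))%N jac_pow.
by rewrite -eqn_mod_dvd ?expn_gt0 // -modnXm exp1n.
Qed.

Lemma prime_dvd_jacobsthal p k :
  prime p -> (6 %| k)%N -> (p %| jacobsthal k)%N = (2 ^ k == 1 %[mod p]).
Proof.
move=> p_pr /dvdnP[q ->].
have jac_pow : (3 * jacobsthal (q * 6) + 1 = 2 ^ (q * 6))%N.
  by rewrite jacobsthal_mul3 oddM andbF addn0.
rewrite -jac_pow eqn_mod_dvd ?leq_addl // addnK Euclid_dvdM //.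
rewrite (@dvdn_prime2 p 3 p_pr isT).
by case: eqP => [-> | _]; rewrite ?dvdn3_jacobsthal.
Qed.

Lemma Zp_nat_eq0 m k : (1 < m)%N -> ((k%:R : 'Z_m) == 0) = (m %| k)%N.
Proof. by move=> m_gt1; rewrite -(inj_eq val_inj) /= val_Zp_nat. Qed.

Lemma Zp_signr_eq1 m k : (2 < m)%N -> ((-1) ^+ k == 1 :> 'Z_m) = ~~ odd k.
Proof.
move=> m_gt2; rewrite -signr_odd; case: (odd k); rewrite ?expr0 ?eqxx // expr1.
by rewrite eq_sym -subr_eq0 opprK (Zp_nat_eq0 2 (ltnW m_gt2)) gtnNdvd.
Qed.

Section VectorSum.
Variables m n : nat.
Implicit Types a : vec m n.

Definition vsum a : 'Z_m := \sum_i a i.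

Lemma vsum_Tmap a : vsum (Tmap a) = 2 * vsum a.
Proof.
rewrite /vsum mulr_natl mulr2n.
rewrite [X in _ = _ + X](reindex_inj (@ordS_inj n)) -big_split /=.
by apply: eq_bigr => i _; rewrite ffunE.
Qed.

Lemma vsum_iter_Tmap a k : vsum (iter k (@Tmap m n) a) = 2 ^+ k * vsum a.
Proof. by elim: k => [|k IH]; rewrite ?mul1r //= vsum_Tmap IH exprS mulrA. Qed.

End VectorSum.

Lemma iter_ord_pred3 (i : 'I_3) : iter 3 (@ord_pred 3) i = i.
Proof. by apply: val_inj; case: i => -[|[|[|]]]. Qed.

Section ThreeVectors.
Variable m : nat.
Implicit Types a : vec m 3.

Lemma vec3E a : a = [ffun j => a (inord (val j))].
Proof. by apply/ffunP => j; rewrite ffunE inord_val. Qed.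

Lemma Tmap3E a i : Tmap a i = vsum a - a (ord_pred i).
Proof.
rewrite [a]vec3E ffunE /vsum !big_ord_recr big_ord0 !ffunE /=.
by case: i => -[|[|[|//]]] ? /=; ring.
Qed.

Lemma iter_Tmap3E a k i :
  iter k (@Tmap m 3) a i =
  (-1) ^+ k * a (iter k (@ord_pred 3) i) + (jacobsthal k)%:R * vsum a.
Proof.
elim: k i => [|k IH] i; first by rewrite /= mul1r mul0r addr0.
rewrite iterS Tmap3E vsum_iter_Tmap IH -iterSr.
have -> : (jacobsthal k.+1)%:R = 2 ^+ k - (jacobsthal k)%:R :> 'Z_m.
  by rewrite -natrX -(jacobsthalS_add k) natrD addrK.
by rewrite exprS; ring.
Qed.

Lemma iter_Tmap3_id a k :
  (6 %| k)%N -> (jacobsthal k)%:R = 0 :> 'Z_m -> iter k (@Tmap m 3) a = a.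
Proof.
move=> /dvdnP[q ->] jac0; apply/ffunP => i.
rewrite iter_Tmap3E jac0 mul0r addr0 -signr_odd oddM andbF mul1r.
have /eqP q6_mod3 : (3 %| q * 6)%N by rewrite dvdn_mull.
by rewrite (iter_mod _ _ iter_ord_pred3) q6_mod3.
Qed.

Definition basis0 : vec m 3 := [ffun i => (i == ord0)%:R].

Lemma vsum_basis0 : vsum basis0 = 1.
Proof.
rewrite /vsum (bigD1 ord0) // big1 => [|i /negbTE i_neq0]; last first.
  by rewrite ffunE i_neq0.
by rewrite [LHS]/= addr0 ffunE eqxx.
Qed.

Lemma basis0_iter_Tmap3_fixed k :
  (2 < m)%N -> iter k (@Tmap m 3) basis0 = basis0 ->
  (6 %| k)%N /\ (jacobsthal k)%:R = 0 :> 'Z_m.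
Proof.
move=> m_gt2 /ffunP fix_e.
have coord i : (-1) ^+ k * basis0 (iter (k %% 3) (@ord_pred 3) i)
               + (jacobsthal k)%:R = basis0 i.
  by rewrite -(iter_mod _ _ iter_ord_pred3) -[RHS]fix_e iter_Tmap3E vsum_basis0 mulr1.
move: (coord ord0) (coord (@Ordinal 3 1 isT)) (coord (@Ordinal 3 2 isT)).
have : (k %% 3 < 3)%N by rewrite ltn_pmod.
case k3: (k %% 3)%N => [|[|[|//]]] _.
all: rewrite !ffunE /= ?mulr0n ?mulr1n !mulr0 !mulr1 !add0r.
- move=> sign_jac jac0 _; rewrite jac0 addr0 in sign_jac; split=> //.
  rewrite (@Gauss_dvd 2 3) // dvdn2 -(Zp_signr_eq1 k m_gt2) sign_jac eqxx.
  exact/eqP.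
- by move=> jac1 _ jac0; have := @oner_neq0 'Z_m; rewrite -jac1 jac0 eqxx.
- by move=> jac1 jac0 _; have := @oner_neq0 'Z_m; rewrite -jac1 jac0 eqxx.
Qed.

End ThreeVectors.

Theorem proposition7p3 (p o : nat) :
  prime p -> (2 < p)%N -> is_order2 p o -> is_Pmax p 3 (lcmn o 6).
Proof.
move=> p_pr p_gt2 ord_o; have p_gt1 := ltnW p_gt2.
have L_gt0 : (0 < lcmn o 6)%N by rewrite lcmn_gt0 andbT; case: ord_o.
have TL_id a : iter (lcmn o 6) (@Tmap p 3) a = a.
  apply: iter_Tmap3_id; first exact: dvdn_lcmr.
  apply/eqP; rewrite Zp_nat_eq0 // prime_dvd_jacobsthal ?dvdn_lcmr //.
  by rewrite (order2_dvd _ ord_o) dvdn_lcml.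
split=> [|a P [_ P_min]]; last exact/P_min/is_period_of_iter_id.
exists (basis0 p); split=> [|Q Q_per]; first exact: is_period_of_iter_id.
have [six_Q jac_Q] :=
  basis0_iter_Tmap3_fixed p_gt2 (is_period_iter_fixed L_gt0 TL_id Q_per).
apply: dvdn_leq; first by case: Q_per.
rewrite dvdn_lcm six_Q -(order2_dvd _ ord_o) -prime_dvd_jacobsthal //.
by rewrite -Zp_nat_eq0 // jac_Q.
Qed.
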